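(* Let $f_0,f_1,f_2\in\mathbb{C}[[z]]$ be in general position and let $R_j^{[n]}$ be as in the context. For $n\in\mathbb{N}$ put $k_2:=\deg R_1^{[n]}$, $k_1:=\deg R_2^{[n]}$, $k_0:=\deg R_3^{[n]}$ and $\mathbf{k}^{[n]}:=(k_0,k_1,k_2)$. Then $|\mathbf{k}^{[n]}|=k_0+k_1+k_2=n-1$, $$R_1^{[n]}f_2+R_2^{[n]}f_1+R_3^{[n]}f_0=O(z^{n+1}),$$ and $(R_3^{[n]},R_2^{[n]},R_1^{[n]})$ is a tuple of Hermite–Padé polynomials of type I for $[f_0,f_1,f_2]$ and the multiindex $\mathbf{k}^{[n]}$, with order of tangency $|\mathbf{k}^{[n]}|+2=n+1$.
   Context: For $g\in\mathbb{C}[[z]]$, $g=O(z^N)$ means the coefficients of $z^0,\dots,z^{N-1}$ vanish. For $\mathbf{k}=(k_0,\dots,k_m)\in\mathbb{Z}_+^{m+1}$, $|\mathbf{k}|=\sum k_j$, a tuple of polynomials $(Q_0,\dots,Q_m)$, not all zero, with $\deg Q_j\le k_j$ and $\sum_j Q_jf_j=O(z^{|\mathbf{k}|+m})$ is a tuple of Hermite–Padé polynomials of type I for $[f_0,\dots,f_m]$ and $\mathbf{k}$ ($|\mathbf{k}|+m$ is the order of tangency). Construction ($m=2$): put $f_j^{[0]}:=f_j$. For $n\ge0$: $c_j^{[n]}$ is the constant term of $f_j^{[n]}$, $a^{[n]}:=-c_2^{[n]}/c_1^{[n]}$, $b^{[n]}:=-c_1^{[n]}/c_0^{[n]}$, $f_2^{[n+1]}:=f_0^{[n]}$,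 $f_1^{[n+1]}:=z^{-1}(f_2^{[n]}+a^{[n]}f_1^{[n]})$, $f_0^{[n+1]}:=z^{-1}(f_1^{[n]}+b^{[n]}f_0^{[n]})$. Let $M^{[n]}:=\begin{pmatrix}0&0&z\\1&a^{[n]}&0\\0&1&b^{[n]}\end{pmatrix}$ and $A^{[n]}:=M^{[n]}\cdots M^{[0]}$, whose third row is $(R_1^{[n]},R_2^{[n]},R_3^{[n]})$. General position: all $c_j^{[n]}\neq0$, and for every $n\ge0$ and every entry of $A^{[n+1]}=M^{[n+1]}A^{[n]}$ (a sum of at most two products of an entry of $M^{[n+1]}$ and an entry of $A^{[n]}$), the degree of the entry equals the maximum of the degrees of these products (zero polynomial has degree $-\infty$). *)

(* Formal power series over C are coefficient sequences
   nat -> C, with C := R[i] for a real type R (the complex numbers). *)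
From HB Require Import structures.
From mathcomp Require Import all_boot all_order all_algebra.
From mathcomp Require Import complex.
From mathcomp Require Import reals.
Set Implicit Arguments. Unset Strict Implicit. Unset Printing Implicit Defensive.
Import Order.TTheory GRing.Theory Num.Theory.
Local Open Scope ring_scope.

Section Defs.
Variable C : fieldType.

Definition series := nat -> C.

Definition sadd (f g : series) : series := fun k => f k + g k.
Definition sscale (a : C) (f : series) : series := fun k => a * f k.
(* z^{-1} g : only applied to series with zero constant term *)
Definition sdivz (f : series) : series := fun k => f k.+1.
Definition pmul (p : {poly C}) (f : series) : series :=
  fun k => \sum_(i < k.+1) p`_i * f (k - i)%N.

Definition bigOz (N : nat) (g : series) : Prop := forall i, (i < N)%N -> g i = 0.

Definition HermitePadeI (m : nat) (f : 'I_m.+1 -> series)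
  (k : 'I_m.+1 -> nat) (Q : 'I_m.+1 -> {poly C}) : Prop :=
  (exists j, Q j != 0) /\
  (forall j, (size (Q j) <= (k j).+1)%N) /\
  bigOz ((\sum_(j < m.+1) k j) + m)%N
        (fun t => \sum_(j < m.+1) pmul (Q j) (f j) t).

(* The construction (m = 2). The state at step n is (f_0^[n], f_1^[n], f_2^[n]). *)
Definition aof (s : series * series * series) : C :=
  let: (f0, f1, f2) := s in - f2 0%N / f1 0%N.
Definition bof (s : series * series * series) : C :=
  let: (f0, f1, f2) := s in - f1 0%N / f0 0%N.

Definition step (s : series * series * series) : series * series * series :=
  let: (f0, f1, f2) := s in
  (sdivz (sadd f1 (sscale (bof s) f0)),
   sdivz (sadd f2 (sscale (aof s) f1)),
   f0).

Definition fstate (f0 f1 f2 : series) (n : nat) := iter n step (f0, f1, f2).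

Definition cst (f0 f1 f2 : series) (n : nat) (j : 'I_3) : C :=
  let: (g0, g1, g2) := fstate f0 f1 f2 n in
  [ffun i : 'I_3 => if val i == 0%N then g0 0%N
                    else if val i == 1%N then g1 0%N else g2 0%N] j.

Definition aseq f0 f1 f2 n := aof (fstate f0 f1 f2 n).
Definition bseq f0 f1 f2 n := bof (fstate f0 f1 f2 n).

Definition Mmat (f0 f1 f2 : series) (n : nat) : 'M[{poly C}]_3 :=
  \matrix_(i < 3, j < 3)
    match val i, val j with
    | 0, 2 => 'X
    | 1, 0 => 1
    | 1, 1 => (aseq f0 f1 f2 n)%:P
    | 2, 1 => 1
    | 2, 2 => (bseq f0 f1 f2 n)%:P
    | _, _ => 0
    end.

Fixpoint Amat (f0 f1 f2 : series) (n : nat) : 'M[{poly C}]_3 :=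
  match n with
  | 0 => Mmat f0 f1 f2 0
  | n'.+1 => Mmat f0 f1 f2 n'.+1 *m Amat f0 f1 f2 n'
  end.

(* General position.  Degrees are compared through size = deg + 1
   (size 0 = 0 encodes deg 0 = -oo), which preserves max. *)
Definition general_position (f0 f1 f2 : series) : Prop :=
  (forall n (j : 'I_3), cst f0 f1 f2 n j != 0) /\
  (forall n (i j : 'I_3),
     size (Amat f0 f1 f2 n.+1 i j) =
     (\max_(l < 3) size (Mmat f0 f1 f2 n.+1 i l * Amat f0 f1 f2 n l j)%R)%N).

End Defs.

From Pilot Require Import Defs.
From HB Require Import structures.
From mathcomp Require Import all_boot all_order all_algebra.
From mathcomp Require Import complex.
From mathcomp Require Import reals.
From mathcomp Require Import zify ring.
Import Order.TTheory GRing.Theory Num.Theory.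
Local Open Scope ring_scope.

Set Implicit Arguments.
Unset Strict Implicit.
Unset Printing Implicit Defensive.

(* Row i of A^[n], paired with (f_2, f_1, f_0), equals
   z^(n+1) times one component of f^[n+1] (rows 0, 1, 2 give f_2, f_1, f_0).
   Multiplying by M^[n] shifts row 2 by z and forms the combinations
   row0 + a row1 and row1 + b row2; the choice of a^[n], b^[n] kills the
   constant term, which gains one more factor of z.  This only needs the
   constant terms c_0^[n], c_1^[n] to be nonzero.

   Under general position the degree of every entry of A^[n+1]
   is the maximum of the degrees of its two contributions, which yields
   the closed form  size A^[n]_(2,j) = (n + 2 + j) div 3.  Summing over j
   gives total degree n - 1, and the theorem follows. *)

Lemma ord3_ind (P : 'I_3 -> Prop) : P 0 -> P 1 -> P 2%:R -> forall i, P i.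
Proof.
by move=> P0 P1 P2 [[|[|[|i]]] hi] //;
  [ have -> : Ordinal hi = 0 | have -> : Ordinal hi = 1 | have -> : Ordinal hi = 2%:R ];
  try exact: val_inj.
Qed.

Lemma big_ord3 (T : Type) (idx : T) op (F : 'I_3 -> T) :
  \big[op/idx]_(l < 3) F l = op (F 0) (op (F 1) (op (F 2%:R) idx)).
Proof.
rewrite !big_ord_recl big_ord0.
by congr (op (F _) (op (F _) (op (F _) _))); apply: val_inj.
Qed.

Section PowerSeries.
Variable C : fieldType.
Implicit Types (p q : {poly C}) (f g h : series C).

Definition zshift (N : nat) g : series C :=
  fun t => if (t < N)%N then 0 else g (t - N)%N.

Lemma pmul0 f t : pmul 0 f t = 0.
Proof. by rewrite /pmul big1 // => i _; rewrite coef0 mul0r. Qed.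

Lemma pmul1 f t : pmul 1 f t = f t.
Proof.
rewrite /pmul big_ord_recl coef1 /= mul1r subn0 big1 ?addr0 // => i _.
by rewrite coef1 /= mul0r.
Qed.

Lemma pmulD p q f t : pmul (p + q) f t = pmul p f t + pmul q f t.
Proof. by rewrite /pmul -big_split /=; apply: eq_bigr => i _; rewrite coefD mulrDl. Qed.

Lemma pmulCM (c : C) q f t : pmul (c%:P * q) f t = c * pmul q f t.
Proof. by rewrite /pmul mulr_sumr; apply: eq_bigr => i _; rewrite coefCM mulrA. Qed.

Lemma pmulXM q f t : pmul ('X * q) f t = zshift 1 (pmul q f) t.
Proof.
rewrite /pmul /zshift big_ord_recl coefXM /= mul0r add0r.
case: t => [|t]; first by rewrite big_ord0.
by rewrite subn1 /=; apply: eq_bigr => i _; rewrite coefXM /= /bump /= add1n subSS.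
Qed.

Lemma zshift_eq N g h t : (forall u, g u = h u) -> zshift N g t = zshift N h t.
Proof. by move=> eq_gh; rewrite /zshift eq_gh. Qed.

Lemma zshift1S N g t : zshift 1 (zshift N g) t = zshift N.+1 g t.
Proof. by case: t => [|t] //; rewrite /zshift subn1 /= ltnS. Qed.

Lemma zshift_elim N g h (a : C) t : g 0%N + a * h 0%N = 0 ->
  zshift N g t + a * zshift N h t = zshift N.+1 (sdivz (sadd g (sscale a h))) t.
Proof.
move=> gh0; rewrite /zshift /sdivz /sadd /sscale.
case: (ltngtP t N) => [ltN|gtN|->]; first by rewrite ltnS ltnW // mulr0 addr0.
  by rewrite ltnS leqNgt gtN /= subnSK.
by rewrite ltnSn subnn.
Qed.

End PowerSeries.

Section Construction.
Variables (C : fieldType) (f0 f1 f2 : series C).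

Local Notation M := (Mmat f0 f1 f2).
Local Notation A := (Amat f0 f1 f2).
Local Notation a := (aseq f0 f1 f2).
Local Notation b := (Defs.bseq f0 f1 f2).

Lemma mulM_row0 k (B : 'M[{poly C}]_3) j : (M k *m B) 0 j = 'X * B 2%:R j.
Proof. by rewrite mxE big_ord3 !mxE /= !mul0r !add0r addr0. Qed.

Lemma mulM_row1 k (B : 'M[{poly C}]_3) j : (M k *m B) 1 j = B 0 j + (a k)%:P * B 1 j.
Proof. by rewrite mxE big_ord3 !mxE /= !mul0r mul1r !addr0. Qed.

Lemma mulM_row2 k (B : 'M[{poly C}]_3) j :
  (M k *m B) 2%:R j = B 1 j + (b k)%:P * B 2%:R j.
Proof. by rewrite mxE big_ord3 !mxE /= !mul0r mul1r !add0r addr0. Qed.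

Definition row_form (B : 'M[{poly C}]_3) (i : 'I_3) : series C :=
  fun t => pmul (B i 0) f2 t + pmul (B i 1) f1 t + pmul (B i 2%:R) f0 t.

Definition rem_comp (s : series C * series C * series C) (i : 'I_3) : series C :=
  let: (g0, g1, g2) := s in
  if val i == 0%N then g2 else if val i == 1%N then g1 else g0.

Lemma row_form_mulM0 k B t : row_form (M k *m B) 0 t = zshift 1 (row_form B 2%:R) t.
Proof.
by rewrite /row_form !mulM_row0 !pmulXM /zshift; case: ifP; rewrite ?addr0.
Qed.

Lemma row_form_mulM1 k B t :
  row_form (M k *m B) 1 t = row_form B 0 t + a k * row_form B 1 t.
Proof. rewrite /row_form !mulM_row1 !pmulD !pmulCM; ring. Qed.

Lemma row_form_mulM2 k B t :
  row_form (M k *m B) 2%:R t = row_form B 1 t + b k * row_form B 2%:R t.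
Proof. rewrite /row_form !mulM_row2 !pmulD !pmulCM; ring. Qed.

Definition remainder_inv (B : 'M[{poly C}]_3) (N k : nat) : Prop :=
  forall i t, row_form B i t = zshift N (rem_comp (fstate f0 f1 f2 k) i) t.

Lemma remainder_inv1 : remainder_inv 1%:M 0 0.
Proof.
apply: ord3_ind => t; rewrite /row_form /zshift /= subn0 !mxE /=;
  rewrite ?pmul0 ?pmul1; ring.
Qed.

Hypothesis cst_neq0 : forall n j, cst f0 f1 f2 n j != 0.

Lemma remainder_inv_mulM B N k :
  remainder_inv B N k -> remainder_inv (M k *m B) N.+1 k.+1.
Proof.
move=> inv_B; have c0 := cst_neq0 k 0; have c1 := cst_neq0 k 1.
have step_k : fstate f0 f1 f2 k.+1 = step (fstate f0 f1 f2 k) by rewrite /fstate iterS.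
apply: ord3_ind => t.
- rewrite row_form_mulM0 -(zshift1S N); apply: zshift_eq => u.
  by rewrite inv_B step_k; case: (fstate f0 f1 f2 k) => [[g0 g1] g2].
- rewrite row_form_mulM1 !inv_B step_k; move: c0 c1; rewrite /aseq /cst.
  case: (fstate f0 f1 f2 k) => [[g0 g1] g2]; rewrite !ffunE /= => c0 c1.
  by apply: zshift_elim; rewrite /aof divfK // subrr.
- rewrite row_form_mulM2 !inv_B step_k; move: c0 c1; rewrite /Defs.bseq /cst.
  case: (fstate f0 f1 f2 k) => [[g0 g1] g2]; rewrite !ffunE /= => c0 c1.
  by apply: zshift_elim; rewrite /bof divfK // subrr.
Qed.

Lemma remainder_invA n : remainder_inv (A n) n.+1 n.+1.
Proof.
elim: n => [|n IH]; last exact: remainder_inv_mulM.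
by rewrite /= -[M 0]mulmx1; apply: remainder_inv_mulM; apply: remainder_inv1.
Qed.

(* The coefficients a^[k], b^[k] are nonzero, so they do not lower degrees. *)
Lemma a_neq0 k : a k != 0.
Proof.
have := cst_neq0 k 1; have := cst_neq0 k 2%:R; rewrite /aseq /cst.
by case: (fstate f0 f1 f2 k) => [[g0 g1] g2]; rewrite !ffunE /aof /= => c2 c1;
  rewrite mulNr oppr_eq0 mulf_neq0 ?invr_eq0.
Qed.

Lemma b_neq0 k : b k != 0.
Proof.
have := cst_neq0 k 0; have := cst_neq0 k 1; rewrite /Defs.bseq /cst.
by case: (fstate f0 f1 f2 k) => [[g0 g1] g2]; rewrite !ffunE /bof /= => c1 c0;
  rewrite mulNr oppr_eq0 mulf_neq0 ?invr_eq0.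
Qed.

Hypothesis size_Amat_max : forall n (i j : 'I_3),
  size (A n.+1 i j) = (\max_(l < 3) size (M n.+1 i l * A n l j)%R)%N.

Lemma size_A_row0S n j :
  size (A n.+1 0 j) = (if A n 2%:R j == 0 then 0%N else (size (A n 2%:R j)).+1).
Proof.
rewrite size_Amat_max big_ord3 !mxE /= !mul0r size_poly0 max0n maxn0.
by case: eqP => [->|/eqP nz]; rewrite ?mulr0 ?size_poly0 // mulrC size_mulX.
Qed.

Lemma size_A_row1S n j :
  size (A n.+1 1 j) = maxn (size (A n 0 j)) (size (A n 1 j)).
Proof.
by rewrite size_Amat_max big_ord3 !mxE /= mul0r size_poly0 mul1r
  size_Cmul ?a_neq0 // maxn0.
Qed.

Lemma size_A_row2S n j :
  size (A n.+1 2%:R j) = maxn (size (A n 1 j)) (size (A n 2%:R j)).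
Proof.
by rewrite size_Amat_max big_ord3 !mxE /= mul0r size_poly0 mul1r
  size_Cmul ?b_neq0 // max0n maxn0.
Qed.

(* Closed form of the degrees, proved jointly for rows 1 and 2 at n + 1
   and row 2 at n (row 0 at n + 1 is recovered from row 2 at n). *)
Lemma size_A_closed n (j : 'I_3) :
  [/\ size (A n.+1 1 j) = ((n + 4 + j) %/ 3)%N,
      size (A n.+1 2%:R j) = ((n + 3 + j) %/ 3)%N
    & size (A n 2%:R j) = ((n + 2 + j) %/ 3)%N].
Proof.
elim: n => [|n [IH1 IH2 IH2']].
  rewrite size_A_row1S size_A_row2S /=.
  by case: j => [[|[|[|j]]] hj] //=; rewrite !mxE /= ?size_polyC ?a_neq0 ?b_neq0
    ?size_poly0 ?size_polyX ?oner_neq0 ?eqxx.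
rewrite size_A_row1S size_A_row2S size_A_row0S IH1 IH2 -size_poly_eq0 IH2'.
by case: eqP => h; split; lia.
Qed.

Lemma size_A_row2 n (j : 'I_3) : size (A n 2%:R j) = ((n + 2 + j) %/ 3)%N.
Proof. by case: (size_A_closed n j). Qed.

End Construction.

Local Open Scope complex_scope.

Theorem corollary1 (R : realType) (f0 f1 f2 : series R[i]) (n : nat) :
  general_position f0 f1 f2 -> (1 <= n)%N ->
  let R1 := Amat f0 f1 f2 n 2%:R 0 in
  let R2 := Amat f0 f1 f2 n 2%:R 1 in
  let R3 := Amat f0 f1 f2 n 2%:R 2%:R in
  let k : 'I_3 -> nat := fun j =>
    if val j == 0%N then (size R3).-1
    else if val j == 1%N then (size R2).-1 else (size R1).-1 in
  [/\ [&& R1 != 0, R2 != 0 & R3 != 0],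
      (k 0%R + k 1%R + k 2%:R)%N = (n - 1)%N,
      bigOz n.+1 (fun t => pmul R1 f2 t + pmul R2 f1 t + pmul R3 f0 t)
    & HermitePadeI (fun j : 'I_3 => if val j == 0%N then f0
                                    else if val j == 1%N then f1 else f2)
                   k
                   (fun j : 'I_3 => if val j == 0%N then R3
                                    else if val j == 1%N then R2 else R1)].
Proof.
move=> [cst_neq0 size_max] n_gt0 R1 R2 R3 k.
have size_row2 := size_A_row2 cst_neq0 size_max n.
have size_R1 : size R1 = ((n + 2) %/ 3)%N by rewrite size_row2 addn0.
have size_R2 : size R2 = ((n + 3) %/ 3)%N by rewrite size_row2 -addnA.
have size_R3 : size R3 = ((n + 4) %/ 3)%N by rewrite size_row2 -addnA.
have R_neq0 : [&& R1 != 0, R2 != 0 & R3 != 0].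
  by rewrite -!size_poly_eq0 size_R1 size_R2 size_R3 /=; apply/and3P; split; lia.
have deg_sum : (k 0%R + k 1%R + k 2%:R)%N = (n - 1)%N.
  by rewrite /k /= size_R1 size_R2 size_R3; lia.
have remainder : bigOz n.+1 (fun t => pmul R1 f2 t + pmul R2 f1 t + pmul R3 f0 t).
  by move=> t lt_tn; have := remainder_invA cst_neq0 n 2%:R t; rewrite /zshift lt_tn.
split=> //; split; first by exists 0; case/and3P: R_neq0.
split; first by apply: ord3_ind; rewrite /k /= leqSpred.
have -> : ((\sum_(j < 3) k j) + 2 = n.+1)%N by rewrite big_ord3 addn0 addnA deg_sum; lia.
by move=> t lt_tn; rewrite big_ord3 /= addr0 -(remainder t lt_tn); ring.
Qed.
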